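(* (Perfect completeness of the Five Cells protocol.) Let a Five Cells puzzle on an $m\times n$ grid be given. If the prover $P$ knows a solution of the puzzle and follows the Five Cells zero-knowledge protocol described in the context, then the verifier $V$ always accepts.
   Context: Five Cells puzzle: an $m\times n$ rectangular grid in which some cells contain a number. A solution is a partition of the grid into pentominoes (connected sets of 5 cells; a pentomino obtained from another by rotation or reflection counts as a different type, giving 63 types) such that for every numbered cell, the number equals the number of that cell's four edges which are borders of pentominoes (edges on the outer boundary of the grid count as borders). Labelling every cell with this count gives the ''extended solution''. Cards: each card has either an integer or nothing (a blank card) on its front; all backs are indistinguishable. A pile-shifting shuffle applied to a matrix of face-down cards (each entry may be a stack, all stacks in a row of equal size) cyclically shifts its columns by a uniformly random amount unknown to everyone. Chosen cut protocol: given face-down cards (or equal-size stacks) $c_1,\dots,c_q$ and a secret index $i$ chosen by $P$, $P$ forms a $3\times q$ matrix with row 1 equal to $c_1,\dots,c_q$, row 2 a face-down card $1$ in column $i$ and $0$ elsewhere, row 3 a card $1$ in column 1 and $0$ elsewhere (turned face-down); a pile-shifting shuffle is applied; row 2 is revealed and the card of row 1 above the $1$ is $c_i$; after $c_i$ has been used it is put back in place, all face-up cards are turned face-down, another pile-shifting shuffle is applied, row 3 is revealed and the columns are cyclically shifted so that its $1$ returns to column 1, restoring the original order. Printing protocol: given a face-down $p\times q$ template and a face-down $p\times q$ area of cards, each template card is placed on the corresponding area card, forming $pq$ stacks of two; for each stack, $P$ uses the chosen cut protocol to select one of its two cards, the selected card is revealed, $V$ rejects unless it is blank, and it is removed. Five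 Cells protocol: $P$ publicly puts a blank card on every cell, appends 4 rows and 4 columns of blank ''dummy'' cards below and to the right, and turns all cards face-down, giving an $(m+4)\times(n+4)$ matrix, read row by row as a sequence $a_1,a_2,\dots$ (so the card below $a_j$ is $a_{j+n+4}$). $P$ builds 63 templates, one per pentomino type: a $5\times5$ matrix with the pentomino at the top-left, each of its cells a card with the number of that cell's edges which are borders of the pentomino, all other cards blank; $V$ checks all templates. Let $B_1,\dots,B_k$ ($k=mn/5$) be the pentominoes of $P$'s solution. For $i=1,\dots,k$: (1) using the chosen cut protocol on the sequence, $P$ selects the top-left card of a $5\times5$ area (cards at positions $j+r(n+4)+c$, $0\le r,c\le 4$) containing $B_i$ in the same position as in its template; (2) using the chosen cut protocol, $P$ selects the template of $B_i$'s type; (3) the printing protocol is applied to this template and area; (4) $P$ reconstructs the used template and returns it to the pile, and $V$ checks again that all 63 templates are correct (rejecting otherwise). Finally $P$ reveals the cards on the originally numbered cells and $V$ rejects unless they match the given numbers; $P$ reveals all dummy cards and $V$ rejects unless they are blank. Otherwise $V$ accepts. *)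

From mathcomp Require Import all_boot.

Set Implicit Arguments.
Unset Strict Implicit.
Unset Printing Implicit Defensive.

(* A card: an integer (here a natural number; all numbers used are in 0..4,
   marker cards are 0 and 1) or blank (None).  A pile (stack) is a seq of cards. *)
Definition Card := option nat.
Definition Pile := seq Card.

Definition cell (m n : nat) := ('I_m * 'I_n)%type.

Definition adj (m n : nat) (x y : cell m n) : bool :=
  ((nat_of_ord x.1 == nat_of_ord y.1) &&
     (((nat_of_ord x.2).+1 == nat_of_ord y.2) || ((nat_of_ord y.2).+1 == nat_of_ord x.2)))
  || ((nat_of_ord x.2 == nat_of_ord y.2) &&
     (((nat_of_ord x.1).+1 == nat_of_ord y.1) || ((nat_of_ord y.1).+1 == nat_of_ord x.1))).

Definition connected_set (m n : nat) (S : {set cell m n}) : bool :=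
  [forall x in S, forall y in S,
     connect [rel u v | [&& u \in S, v \in S & adj u v]] x y].

Definition pentomino (m n : nat) (S : {set cell m n}) : bool :=
  (#|S| == 5) && connected_set S.

Definition natS (m n : nat) (S : {set cell m n}) : pred (nat * nat) :=
  fun rc => [exists x in S, (nat_of_ord x.1, nat_of_ord x.2) == rc].

(* number of the four edges of cell (a,b) that are borders of the region S
   (i.e. the neighbour across the edge is not in S; an edge with no neighbour
   at all, e.g. on the outer boundary, is a border) *)
Definition nbr_count (S : pred (nat * nat)) (a b : nat) : nat :=
  ((a == 0) || ~~ S (a.-1, b)) + ~~ S (a.+1, b)
  + ((b == 0) || ~~ S (a, b.-1)) + ~~ S (a, b.+1).

Definition is_solution (m n : nat) (clue : cell m n -> option nat)
    (P : {set {set cell m n}}) : Prop :=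
  [/\ partition P [set: cell m n],
      (forall B, B \in P -> pentomino B) &
      (forall x v, clue x = Some v ->
          nbr_count (natS (pblock P x)) (nat_of_ord x.1) (nat_of_ord x.2) = v)].

(* pentomino types (rotations/reflections distinct) = pentominoes inside a
   5x5 square touching its top row and its left column ("top-left") *)
Definition pent_types : seq {set cell 5 5} :=
  enum [set S : {set cell 5 5} | [&& pentomino S,
          [exists x in S, nat_of_ord x.1 == 0] &
          [exists x in S, nat_of_ord x.2 == 0]]].

Definition tmpl_cards (S : {set cell 5 5}) : Pile :=
  [seq (if natS S (r, c) then Some (nbr_count (natS S) r c) else None)
     | r <- iota 0 5, c <- iota 0 5].

Definition correct_templates : seq Pile := map tmpl_cards pent_types.

(* [sh] gives the (arbitrary, unknown) shift amount of every pile-shifting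
   shuffle, indexed by a label identifying the shuffle occurrence.
   The continuation [k] receives the shuffled row 1 and the (public) column
   [p] where the revealed row 2 has its 1; the selected pile is the one in
   column p.  It returns the modified row 1 (or None = V rejects) and extra
   data.  Then the order is restored with the second shuffle and row 3. *)
Definition chosen_cut {A : Type} (sh : seq nat -> nat) (l : seq nat)
    (c : seq Pile) (i : nat) (k : seq Pile -> nat -> option (seq Pile * A))
    : option (seq Pile * A) :=
  let q := size c in
  let row2 : seq Card := [seq (if k0 == i then Some 1 else Some 0) | k0 <- iota 0 q] in
  let row3 : seq Card := [seq (if k0 == 0 then Some 1 else Some 0) | k0 <- iota 0 q] in
  let cols1 := rotr (sh (rcons l 0) %% q) (zip c (zip row2 row3)) in
  let p := index (Some 1) (unzip1 (unzip2 cols1)) in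
  match k (unzip1 cols1) p with
  | None => None
  | Some (c', a) =>
      let cols3 := rotr (sh (rcons l 1) %% q) (zip c' (unzip2 cols1)) in
      let p3 := index (Some 1) (unzip2 (unzip2 cols3)) in
      Some (unzip1 (rot p3 cols3), a)
  end.

(* one stack (template card on area card at position pos): P selects a blank
   card (the template card if it is blank, else the area card); it is revealed,
   V rejects unless blank, it is removed; the remaining card stays in place. *)
Definition print_stack (sh : seq nat -> nat) (l : seq nat) (tcard : Card)
    (S : seq Pile) (pos : nat) : option (seq Pile) :=
  let b := if tcard == None then 0 else 1 in
  match chosen_cut (A := unit) sh l [:: [:: tcard]; nth [::] S pos] b
          (fun cs p => if nth [::] cs p == [:: None]
                       then Some (set_nth [::] cs p [::], tt) else None) with
  | None => None
  | Some (res, _) => Some (set_nth [::] S pos (flatten res))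
  end.

(* (template index r, area position) pairs of the 5x5 area whose top-left card
   is at position p of a row-major sequence of length q with N columns *)
Definition area_positions (N p q : nat) : seq (nat * nat) :=
  [seq (r, (p + (r %/ 5) * N + r %% 5) %% q) | r <- iota 0 25].

Fixpoint printing (sh : seq nat -> nat) (l : seq nat) (T : Pile)
    (poss : seq (nat * nat)) (S : seq Pile) : option (seq Pile) :=
  match poss with
  | [::] => Some S
  | (r, pos) :: rest =>
      match print_stack sh (rcons l r) (nth None T r) S pos with
      | None => None
      | Some S' => printing sh l T rest S'
      end
  end.

Definition min_row (m n : nat) (B : {set cell m n}) : nat :=
  \big[minn/m]_(x in B) nat_of_ord x.1.
Definition min_col (m n : nat) (B : {set cell m n}) : nat :=
  \big[minn/n]_(x in B) nat_of_ord x.2.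

Definition norm_block (m n : nat) (B : {set cell m n}) : {set cell 5 5} :=
  [set y : cell 5 5 | natS B (nat_of_ord y.1 + min_row B, nat_of_ord y.2 + min_col B)].

(* one iteration (index i) of the main loop, for pentomino B.
   S = the (m+4)x(n+4) card sequence, TP = the pile of 63 templates. *)
Definition block_step (m n : nat) (sh : seq nat -> nat) (i : nat)
    (B : {set cell m n}) (S TP : seq Pile) : option (seq Pile * seq Pile) :=
  let N := n + 4 in
  let j := min_row B * N + min_col B in
  let t := index (norm_block B) pent_types in
  match chosen_cut sh [:: i; 0] S j (fun S1 p =>
     match chosen_cut sh [:: i; 1] TP t (fun TP1 p' =>
        match printing sh [:: i; 2] (nth [::] TP1 p') (area_positions N p (size S1)) S1 with
        | None => None
        | Some S1' => Some (set_nth [::] TP1 p' [::], S1')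
        end) with
     | None => None
     | Some (TP2, S1') => Some (S1', TP2)
     end) with
  | None => None
  | Some (S2, TP2) =>
      let TP3 := set_nth [::] TP2 t (tmpl_cards (nth set0 pent_types t)) in
      if TP3 == correct_templates then Some (S2, TP3) else None
  end.

Fixpoint run_blocks (m n : nat) (sh : seq nat -> nat) (i : nat)
    (bs : seq {set cell m n}) (S TP : seq Pile) : option (seq Pile * seq Pile) :=
  match bs with
  | [::] => Some (S, TP)
  | B :: bs' =>
      match block_step sh i B S TP with
      | None => None
      | Some (S', TP') => run_blocks sh i.+1 bs' S' TP'
      end
  end.

Definition five_cells_accepts (m n : nat) (clue : cell m n -> option nat)
    (bs : seq {set cell m n}) (sh : seq nat -> nat) : bool :=
  let q := (m + 4) * (n + 4) in
  let S0 : seq Pile := nseq q [:: None] in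
  let TP0 := map tmpl_cards pent_types in
  (TP0 == correct_templates) &&
  match run_blocks sh 0 bs S0 TP0 with
  | None => false
  | Some (Sf, _) =>
      [forall x : cell m n,
         if clue x is Some v
         then nth [::] Sf (nat_of_ord x.1 * (n + 4) + nat_of_ord x.2) == [:: Some v]
         else true]
      && all (fun pos => ((m <= pos %/ (n + 4)) || (n <= pos %% (n + 4)))
                         ==> (nth [::] Sf pos == [:: None]))
             (iota 0 q)
  end.

(* A chosen cut rotates the q columns by an unknown amount s; the two marker rows rotate
   with the piles, so P finds the selected pile in column (i + s) mod q, and the second
   shuffle followed by the realignment of row 3 undoes the rotation exactly.  Printing a
   stack only ever reveals a blank card, provided the area card under every numbered
   template card is blank.  A connected set of five cells spans at most five rows and
   columns, so each pentomino B of the solution lies in the 5x5 area at its bounding box,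
   and its translate to the top-left corner is one of the 63 templates.  Since the blocks
   are disjoint, printing them one after the other keeps the invariant that every card on
   a covered cell carries the border count of its block and every other card is blank.
   At the end every cell carries its border count, which is its clue when it has one,
   and the dummy cards are still blank. *)

From mathcomp Require Import all_boot zify.

Set Implicit Arguments.
Unset Strict Implicit.
Unset Printing Implicit Defensive.

Lemma eqn_rotr_index q s j k : s <= q -> j < q -> k < q ->
  (j == (k + s) %% q) = ((j + (q - s)) %% q == k).
Proof.
move=> hs hj hk; apply/eqP/eqP => [->|<-].
  by rewrite modnDml -addnA subnKC // modnDr modn_small.
by rewrite modnDml -addnA subnK // modnDr modn_small.
Qed.

Section Rotation.
Variables (T : Type) (x0 : T).

Lemma nth_rot (y : seq T) k j : k <= size y -> j < size y ->
  nth x0 (rot k y) j = nth x0 y ((j + k) %% size y).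
Proof.
move=> hk hj; rewrite /rot nth_cat size_drop; case: ltnP => h.
  by rewrite nth_drop addnC modn_small //; lia.
have -> : (j + k) %% size y = j - (size y - k).
  have -> : j + k = j - (size y - k) + size y by lia.
  by rewrite modnDr modn_small //; lia.
by rewrite nth_take //; lia.
Qed.

Lemma nth_rotr (y : seq T) s j : s <= size y -> j < size y ->
  nth x0 (rotr s y) j = nth x0 y ((j + (size y - s)) %% size y).
Proof. by move=> hs hj; rewrite /rotr nth_rot ?leq_subr. Qed.

Lemma nth_rotr_shift (y : seq T) s k : s < size y -> k < size y ->
  nth x0 (rotr s y) ((k + s) %% size y) = nth x0 y k.
Proof.
move=> hs hk; have y_gt0 : 0 < size y by lia.
rewrite nth_rotr ?(ltnW hs) ?ltn_pmod //.
by rewrite modnDml -addnA subnKC ?(ltnW hs) // modnDr modn_small.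
Qed.

Lemma rotr_set_nth (y : seq T) s k v : s < size y -> k < size y ->
  set_nth x0 (rotr s y) ((k + s) %% size y) v = rotr s (set_nth x0 y k v).
Proof.
move=> hs hk; have sz_set : size (set_nth x0 y k v) = size y.
  by rewrite size_set_nth; apply/maxn_idPr.
have hks : (k + s) %% size y < size y by rewrite ltn_pmod //; case: (size y) hk.
apply: (@eq_from_nth _ x0) => [|j].
  by rewrite size_set_nth !size_rotr sz_set; apply/maxn_idPr.
rewrite size_set_nth size_rotr (maxn_idPr hks) => hj.
rewrite nth_set_nth /=.
by rewrite eqn_rotr_index ?(ltnW hs) // !nth_rotr ?sz_set ?(ltnW hs) // nth_set_nth.
Qed.

Lemma set_nth_nth (y : seq T) k : k < size y -> set_nth x0 y k (nth x0 y k) = y.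
Proof.
move=> hk; apply: (@eq_from_nth _ x0) => [|j _].
  by rewrite size_set_nth; apply/maxn_idPr.
by rewrite nth_set_nth /=; case: eqP => [->|].
Qed.

End Rotation.

Lemma rot_rotr_mod T (y : seq T) s t : s < size y -> t < size y ->
  rot ((s + t) %% size y) (rotr t y) = rot s y.
Proof.
case: y => [//|x0 y'] hs ht; set y := x0 :: y' in hs ht *.
have hst : (s + t) %% size y < size y by rewrite ltn_pmod.
apply: (@eq_from_nth _ x0) => [|j]; first by rewrite !size_rot.
rewrite size_rot (size_rotr t y) => hj.
rewrite nth_rot (size_rotr t y) ?(ltnW hst) // nth_rotr ?(ltnW ht) ?ltn_pmod //.
rewrite nth_rot ?(ltnW hs) // modnDml addnAC modnDmr.
by rewrite -addnA (addnCA (size y - t) s t) subnK ?(ltnW ht) // addnA modnDr.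
Qed.

Definition marker (q i : nat) : seq Card :=
  [seq (if k == i then Some 1 else Some 0) | k <- iota 0 q].

Lemma size_marker q i : size (marker q i) = q.
Proof. by rewrite size_map size_iota. Qed.

Lemma nth_marker q i k : k < q ->
  nth None (marker q i) k = if k == i then Some 1 else Some 0.
Proof. by move=> hk; rewrite (nth_map 0) ?size_iota // nth_iota. Qed.

Lemma index_marker q i : i < q -> index (Some 1) (marker q i) = i.
Proof.
move=> hi; have in_marker : Some 1 \in marker q i.
  by rewrite -[Some 1](_ : nth None (marker q i) i = _) ?mem_nth ?size_marker ?nth_marker ?eqxx.
have := nth_index None in_marker.
rewrite nth_marker; last by rewrite -[X in _ < X](size_marker q i) index_mem.
by case: eqP.
Qed.

Lemma rotr_marker q s i : s < q -> i < q -> rotr s (marker q i) = marker q ((i + s) %% q).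
Proof.
move=> hs hi; have q_gt0 : 0 < q by lia.
apply: (@eq_from_nth _ None) => [|k]; first by rewrite size_rotr !size_marker.
rewrite size_rotr size_marker => hk.
rewrite nth_rotr ?size_marker ?(ltnW hs) // !nth_marker ?ltn_pmod //.
by rewrite (eqn_rotr_index (ltnW hs)) // ltn_pmod.
Qed.

Lemma chosen_cutE A sh l (c : seq Pile) i (k : seq Pile -> nat -> option (seq Pile * A)) :
  let s := sh (rcons l 0) %% size c in
  i < size c ->
  (forall c' a, k (rotr s c) ((i + s) %% size c) = Some (c', a) -> size c' = size c) ->
  chosen_cut sh l c i k =
    omap (fun ca => (rot s ca.1, ca.2)) (k (rotr s c) ((i + s) %% size c)).
Proof.
move=> s hi sz_k; rewrite /chosen_cut -/s.
set q := size c; set s3 := sh (rcons l 1) %% q.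
have q_gt0 : 0 < q by lia.
have hs : s < q by rewrite ltn_pmod.
have hs3 : s3 < q by rewrite ltn_pmod.
rewrite -/(marker q i) -/(marker q 0).
have sz_rows : size (zip (marker q i) (marker q 0)) = q by rewrite size_zip !size_marker minnn.
rewrite /unzip1 /unzip2 !map_rotr -/(unzip1 _) -/(unzip2 _).
rewrite unzip2_zip ?sz_rows // unzip1_zip ?sz_rows // -/(unzip1 _) unzip1_zip ?size_marker //.
rewrite rotr_marker // index_marker ?ltn_pmod //.
case E: (k _ _) => [[c' a]|] //=.
have sz_c' : size c' = q by exact: sz_k E.
rewrite map_rot !map_rotr -/(unzip1 _) -/(unzip2 _) unzip1_zip ?size_rotr ?sz_rows ?sz_c' //.
rewrite -/(unzip2 _) unzip2_zip ?size_rotr ?sz_rows ?sz_c' // /unzip2 map_rotr -/(unzip2 _).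
rewrite unzip2_zip ?size_marker // !rotr_marker ?ltn_pmod // index_marker ?ltn_pmod //.
by rewrite add0n (modn_small hs) -sz_c' rot_rotr_mod ?sz_c'.
Qed.

Definition print_card (tcard : Card) (card : Pile) : Pile :=
  if tcard is Some v then [:: Some v] else card.

Lemma print_stackE sh l tcard S pos : pos < size S ->
  (tcard != None -> nth [::] S pos = [:: None]) ->
  print_stack sh l tcard S pos =
    Some (set_nth [::] S pos (print_card tcard (nth [::] S pos))).
Proof.
move=> hpos blank; rewrite /print_stack.
set k := fun cs p => _.
have remove_blank c b : b < size c -> nth [::] c b = [:: None] ->
    chosen_cut sh l c b k = Some (set_nth [::] c b [::], tt).
  move=> hb cb; set s := sh (rcons l 0) %% size c.
  have hs : s < size c by rewrite ltn_pmod //; lia.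
  have k_rot : k (rotr s c) ((b + s) %% size c) = Some (rotr s (set_nth [::] c b [::]), tt).
    by rewrite /k nth_rotr_shift // cb eqxx rotr_set_nth.
  rewrite chosen_cutE -/s ?k_rot /= ?rotrK // => c' a.
  by move=> -[<- _]; rewrite size_rotr size_set_nth; apply/maxn_idPr.
case: tcard blank => [v|] blank /=.
  by rewrite remove_blank //= blank.
by rewrite remove_blank //= cats0 set_nth_nth.
Qed.

Lemma print_stack_size sh l tcard S pos S' : pos < size S ->
  print_stack sh l tcard S pos = Some S' -> size S' = size S.
Proof.
move=> hpos; rewrite /print_stack; case: chosen_cut => [[res _]|] // [<-].
by rewrite size_set_nth; apply/maxn_idPr.
Qed.

Lemma print_stack_rotr sh l tcard S pos s : pos < size S -> s < size S ->
  print_stack sh l tcard (rotr s S) ((pos + s) %% size S) =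
    omap (rotr s) (print_stack sh l tcard S pos).
Proof.
move=> hpos hs; rewrite /print_stack nth_rotr_shift //.
by case: chosen_cut => [[res _]|] //=; rewrite rotr_set_nth.
Qed.

Lemma printing_size sh l T poss S S' : all (fun rc => rc.2 < size S) poss ->
  printing sh l T poss S = Some S' -> size S' = size S.
Proof.
elim: poss S => [|[r pos] poss IH] S /=; first by move=> _ [<-].
case/andP=> hpos hposs; case E: print_stack => [S1|] //.
have sz := print_stack_size hpos E.
by rewrite -sz in hposs *; apply: IH.
Qed.

Lemma printing_rotr sh l T poss S s : s < size S -> all (fun rc => rc.2 < size S) poss ->
  printing sh l T [seq (rc.1, (rc.2 + s) %% size S) | rc <- poss] (rotr s S) =
    omap (rotr s) (printing sh l T poss S).
Proof.
elim: poss S => [|[r pos] poss IH] S hs //= /andP[hpos hposs].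
rewrite print_stack_rotr //; case E: print_stack => [S'|] //=.
have sz := print_stack_size hpos E.
by rewrite -sz IH ?sz.
Qed.

Lemma printing_correct sh l T (poss : seq (nat * nat)) S :
  uniq (unzip2 poss) -> all (fun rc => rc.2 < size S) poss ->
  (forall r pos, (r, pos) \in poss ->
     nth None T r != None -> nth [::] S pos = [:: None]) ->
  exists2 S', printing sh l T poss S = Some S' &
    [/\ size S' = size S,
        forall r pos, (r, pos) \in poss ->
          nth [::] S' pos = print_card (nth None T r) (nth [::] S pos) &
        forall pos, pos \notin unzip2 poss -> nth [::] S' pos = nth [::] S pos].
Proof.
elim: poss S => [|[r pos] poss IH] S /=; first by exists S.
case/andP=> pos_notin uniq_poss /andP[hpos hposs] blank.
rewrite print_stackE //; last by apply: blank; rewrite mem_head.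
set S1 := set_nth _ S pos _.
have sz1 : size S1 = size S by rewrite size_set_nth; apply/maxn_idPr.
have nth_S1 pos' : pos' != pos -> nth [::] S1 pos' = nth [::] S pos'.
  by move=> ne; rewrite nth_set_nth /= (negbTE ne).
have ne_pos r' pos' : (r', pos') \in poss -> pos' != pos.
  by move=> hin; apply: contraNneq pos_notin => <-; exact: (map_f snd hin).
have hposs1 : all (fun rc => rc.2 < size S1) poss by rewrite sz1.
have blank1 r' pos' : (r', pos') \in poss ->
    nth None T r' != None -> nth [::] S1 pos' = [:: None].
  by move=> hin; rewrite nth_S1 ?(ne_pos r') //; apply: blank; rewrite in_cons hin orbT.
have [S' -> [sz' in_poss notin_poss]] := IH S1 uniq_poss hposs1 blank1.
exists S'; split; first by rewrite sz'.
  move=> r' pos'; rewrite in_cons => /orP[/eqP[-> ->]|hin].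
    by rewrite notin_poss // nth_set_nth /= eqxx.
  by rewrite (in_poss r') // nth_S1 ?(ne_pos r').
by move=> pos'; rewrite in_cons negb_or => /andP[ne /notin_poss ->]; rewrite nth_S1.
Qed.

Lemma area_positions_rotr N j s q : 0 < q ->
  area_positions N ((j + s) %% q) q =
    [seq (rc.1, (rc.2 + s) %% q) | rc <- area_positions N j q].
Proof.
move=> q_gt0; rewrite /area_positions -map_comp; apply: eq_map => r /=.
by rewrite -!addnA !modnDml addnAC.
Qed.

Lemma area_positions_lt N j q : 0 < q -> all (fun rc => rc.2 < q) (area_positions N j q).
Proof. by move=> q_gt0; apply/allP => rc /mapP[r _ ->]; rewrite ltn_pmod. Qed.

Lemma block_stepE m n sh i (B : {set cell m n}) S :
  let j := min_row B * (n + 4) + min_col B in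
  norm_block B \in pent_types -> j < size S ->
  block_step sh i B S correct_templates =
    omap (fun S' => (S', correct_templates))
      (printing sh [:: i; 2] (tmpl_cards (norm_block B)) (area_positions (n + 4) j (size S)) S).
Proof.
move=> j B_type hj; rewrite /block_step -/j nth_index //.
set t := index _ _; set T := tmpl_cards _.
set s := sh (rcons [:: i; 0] 0) %% size S.
set s2 := sh (rcons [:: i; 1] 0) %% size correct_templates.
have S_gt0 : 0 < size S by lia.
have ht : t < size correct_templates by rewrite size_map index_mem.
have hs : s < size S by rewrite ltn_pmod.
have hs2 : s2 < size correct_templates by rewrite ltn_pmod //; lia.
have nth_T : nth [::] correct_templates t = T.
  by rewrite /t /T (nth_map set0) ?nth_index ?index_mem.
have print_rotr :
    printing sh [:: i; 2] T (area_positions (n + 4) ((j + s) %% size S) (size S)) (rotr s S)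
    = omap (rotr s) (printing sh [:: i; 2] T (area_positions (n + 4) j (size S)) S).
  by rewrite area_positions_rotr // printing_rotr // area_positions_lt.
rewrite chosen_cutE // -/s.
all: rewrite size_rotr chosen_cutE // -/s2 nth_rotr_shift // nth_T print_rotr rotr_set_nth //.
all: case E: (printing _ _ _ _ S) => [S'|] //=; rewrite ?rotrK.
- by rewrite set_set_nth eqxx -nth_T set_nth_nth // eqxx.
- by move=> c' a [<- _]; rewrite size_rotr size_set_nth; apply/maxn_idPr.
- by move=> c' a [<- _]; rewrite size_rotr (printing_size (area_positions_lt _ _ S_gt0) E).
- by move=> c' a [<- _]; rewrite size_rotr size_set_nth; apply/maxn_idPr.
Qed.

Lemma geq_bigmin (T : finType) (A : {set T}) (F : T -> nat) idx x :
  x \in A -> \big[minn/idx]_(y in A) F y <= F x.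
Proof.
move=> hx; rewrite -big_filter; have : x \in [seq y <- index_enum T | y \in A].
  by rewrite mem_filter hx mem_index_enum.
elim: [seq _ <- _ | _] => [//|y r IH]; rewrite in_cons big_cons.
by case/orP=> [/eqP <-|/IH]; [exact: geq_minl | apply: leq_trans; exact: geq_minr].
Qed.

Lemma bigmin_attained (T : finType) (A : {set T}) (F : T -> nat) idx x :
  x \in A -> F x < idx -> exists2 y, y \in A & F y = \big[minn/idx]_(z in A) F z.
Proof.
move=> hx lt_idx; set v := \big[minn/idx]_(z in A) F z.
have : (v == idx) || [exists y in A, F y == v].
  apply: (big_ind (fun w => (w == idx) || [exists y in A, F y == w])) => [|a b|y hy].
  - by rewrite eqxx.
  - by rewrite /minn; case: ifP.
  - by apply/orP; right; apply/exists_inP; exists y.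
case/orP=> [/eqP v_idx|/exists_inP[y hy /eqP]]; last by exists y.
by have := geq_bigmin F idx hx; rewrite -/v v_idx leqNgt lt_idx.
Qed.

Lemma adj_path_bound m n (x : cell m n) p : path (@adj m n) x p ->
  ((last x p).1 : nat) <= x.1 + size p /\ ((last x p).2 : nat) <= x.2 + size p.
Proof.
elim: p x => [|y p IH] x /=; first by rewrite !addn0.
by case/andP=> xy /IH; rewrite /adj in xy; lia.
Qed.

Lemma pentomino_span m n (B : {set cell m n}) x y : pentomino B -> x \in B -> y \in B ->
  (y.1 : nat) <= x.1 + 4 /\ (y.2 : nat) <= x.2 + 4.
Proof.
case/andP=> /eqP card5 /forall_inP conn hx hy.
have /connectP[p0 hp0 ->] := forall_inP (conn x hx) y hy.
have [p hp uniq_p _] := shortenP hp0.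
have p_in_B : {subset x :: p <= B}.
  have /allP : all (mem B) p.
    by elim: p (x) hp {uniq_p} => //= z p IH x' /andP[/and3P[_ -> _] /IH].
  by move=> p_B z; rewrite in_cons => /orP[/eqP -> //|/p_B].
have size_p : size (x :: p) <= 5.
  by rewrite -card5 cardE; apply: uniq_leq_size => // z /p_in_B; rewrite mem_enum.
have /adj_path_bound : path (@adj m n) x p by apply: sub_path hp => u v /and3P[].
have le_p : size p <= 4 := size_p.
by case=> h1 h2; split; [apply: leq_trans h1 _ | apply: leq_trans h2 _]; rewrite leq_add2l.
Qed.

Lemma nbr_count_shift (A A' : pred (nat * nat)) dr dc :
  (forall a b, A (a, b) = A' (a + dr, b + dc)) ->
  (forall a b, A' (a, b) -> dr <= a /\ dc <= b) ->
  forall a b, nbr_count A a b = nbr_count A' (a + dr) (b + dc).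
Proof.
move=> shiftA low a b; rewrite /nbr_count !shiftA !addSn.
have border_row : ((a == 0) || ~~ A' (a.-1 + dr, b + dc)) =
                  ((a + dr == 0) || ~~ A' ((a + dr).-1, b + dc)).
  case: a => [|a] //=; rewrite add0n; case: dr {shiftA} low => [|dr] low //=.
  by case E: (A' _) => //; have := low _ _ E; lia.
have border_col : ((b == 0) || ~~ A' (a + dr, b.-1 + dc)) =
                  ((b + dc == 0) || ~~ A' (a + dr, (b + dc).-1)).
  case: b {border_row} => [|b] //=; rewrite add0n; case: dc {shiftA} low => [|dc] low //=.
  by case E: (A' _) => //; have := low _ _ E; lia.
by rewrite border_row border_col.
Qed.

Lemma nth_grid5 T (x0 : T) (f : nat -> nat -> T) r : r < 25 ->
  nth x0 [seq f a b | a <- iota 0 5, b <- iota 0 5] r = f (r %/ 5) (r %% 5).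
Proof. by do 25! case: r => [|r] //. Qed.

Section Grid.
Variables m n : nat.
Implicit Types (x : cell m n) (B : {set cell m n}) (Q : {set {set cell m n}}).

Definition cell_pos x : nat := x.1 * (n + 4) + x.2.

Definition pos_cell (pos : nat) : option (cell m n) :=
  if insub (pos %/ (n + 4)) is Some a then
    if insub (pos %% (n + 4)) is Some b then Some (a, b) else None
  else None.

Lemma cell_pos_divmod x : cell_pos x %/ (n + 4) = x.1 /\ cell_pos x %% (n + 4) = x.2.
Proof.
have lt_x2 : (x.2 : nat) < n + 4 by have := ltn_ord x.2; lia.
have N_gt0 : 0 < n + 4 by rewrite addn4.
by rewrite /cell_pos divnMDl // modnMDl (divn_small lt_x2) (modn_small lt_x2) addn0.
Qed.

Lemma cell_posK : pcancel cell_pos pos_cell.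
Proof.
by move=> x; rewrite /pos_cell; have [-> ->] := cell_pos_divmod x; rewrite !valK; case: x.
Qed.

Lemma pos_cellK : ocancel pos_cell cell_pos.
Proof.
move=> pos; rewrite /pos_cell; case: insubP => [a _ ea|] //; case: insubP => [b _ eb|] //=.
by rewrite /cell_pos /= ea eb -divn_eq.
Qed.

Lemma cell_pos_lt x : cell_pos x < (m + 4) * (n + 4).
Proof. by rewrite /cell_pos; have := ltn_ord x.1; have := ltn_ord x.2; nia. Qed.

Lemma pos_cell_dummy pos :
  (m <= pos %/ (n + 4)) || (n <= pos %% (n + 4)) -> pos_cell pos = None.
Proof.
rewrite /pos_cell => /orP[h|h]; first by rewrite insubN // -leqNgt.
by case: insub => // a; rewrite insubN // -leqNgt.
Qed.

Definition block_card B (pos : nat) : Card :=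
  if pos_cell pos is Some x then
    if x \in B then Some (nbr_count (natS B) x.1 x.2) else None
  else None.

Definition expected_pile Q (pos : nat) : Pile :=
  if pos_cell pos is Some x then
    if x \in cover Q then [:: Some (nbr_count (natS (pblock Q x)) x.1 x.2)] else [:: None]
  else [:: None].

Lemma expected_pile0 pos : expected_pile set0 pos = [:: None].
Proof. by rewrite /expected_pile /cover big_set0; case: pos_cell => // x; rewrite in_set0. Qed.

Lemma expected_pile_setU1 Q B pos : trivIset (B |: Q) ->
  expected_pile (B |: Q) pos = print_card (block_card B pos) (expected_pile Q pos).
Proof.
move=> triv; rewrite /expected_pile /block_card; case: pos_cell => // x.
have coverU1 : cover (B |: Q) = B :|: cover Q by rewrite /cover bigcup_setU big_set1.
case: (boolP (x \in B)) => [xB|xNB] /=.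
  by rewrite coverU1 in_setU xB (def_pblock triv (setU11 _ _) xB).
rewrite coverU1 in_setU (negbTE xNB) /=; case: ifP => // xQ.
by rewrite (def_pblock triv (setU1r _ (pblock_mem xQ))) ?mem_pblock.
Qed.

Lemma expected_pile_blank Q B pos : trivIset (B |: Q) -> B \notin Q ->
  block_card B pos != None -> expected_pile Q pos = [:: None].
Proof.
move=> triv BNQ; rewrite /expected_pile /block_card; case: pos_cell => // x.
case: ifP => // xB _; case: ifP => // xQ; case/negP: BNQ.
have xQB : pblock Q x \in B |: Q by rewrite setU1r ?pblock_mem.
by rewrite -(def_pblock triv (setU11 _ _) xB) (def_pblock triv xQB) ?mem_pblock ?pblock_mem.
Qed.


Lemma block_card_pos B a b : b < n + 4 ->
  block_card B (a * (n + 4) + b) =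
    if natS B (a, b) then Some (nbr_count (natS B) a b) else None.
Proof.
move=> lt_b; have N_gt0 : 0 < n + 4 by rewrite addn4.
have coordsE x : ((x.1 : nat, x.2 : nat) == (a, b)) = (cell_pos x == a * (n + 4) + b).
  apply/eqP/eqP => [[<- <-] //| e]; have [e1 e2] := cell_pos_divmod x.
  by rewrite -e1 -e2 e divnMDl // modnMDl (divn_small lt_b) (modn_small lt_b) addn0.
have natSE : natS B (a, b) = [exists x in B, cell_pos x == a * (n + 4) + b].
  by apply: eq_existsb => x; rewrite coordsE.
rewrite /block_card natSE; case E: pos_cell => [x|].
  have := pos_cellK (a * (n + 4) + b); rewrite E /= => pos_x.
  have /eqP[-> ->] : (x.1 : nat, x.2 : nat) == (a, b) by rewrite coordsE pos_x.
  congr (if _ then _ else _); apply/idP/exists_inP => [xB|[y yB /eqP]].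
    by exists x; rewrite ?pos_x.
  by rewrite -pos_x => /(pcan_inj cell_posK) <-.
case: exists_inP => // -[x _ /eqP pos_x].
by move: E; rewrite -pos_x cell_posK.
Qed.

Section Pentomino.
Variable B : {set cell m n}.
Hypothesis pentB : pentomino B.

Let card_B : #|B| = 5. Proof. by case/andP: pentB => /eqP. Qed.

Let B_neq0 : exists x, x \in B.
Proof. by apply/set0Pn; rewrite -card_gt0 card_B. Qed.

Lemma min_row_attained : exists2 x, x \in B & (x.1 : nat) = min_row B.
Proof. by have [x xB] := B_neq0; exact: bigmin_attained xB (ltn_ord _). Qed.

Lemma min_col_attained : exists2 x, x \in B & (x.2 : nat) = min_col B.
Proof. by have [x xB] := B_neq0; exact: bigmin_attained xB (ltn_ord _). Qed.

Lemma pentomino_box x : x \in B ->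
  [/\ min_row B <= x.1, (x.1 : nat) <= min_row B + 4,
      min_col B <= x.2 & (x.2 : nat) <= min_col B + 4].
Proof.
move=> xB; have [xr xrB er] := min_row_attained; have [xc xcB ec] := min_col_attained.
have [span_r _] := pentomino_span pentB xrB xB; have [_ span_c] := pentomino_span pentB xcB xB.
by split; [exact: geq_bigmin | rewrite -er | exact: geq_bigmin | rewrite -ec].
Qed.

Definition to_norm x : cell 5 5 := (inord (x.1 - min_row B), inord (x.2 - min_col B)).

Lemma to_norm_val x : x \in B ->
  ((to_norm x).1 : nat) = x.1 - min_row B /\ ((to_norm x).2 : nat) = x.2 - min_col B.
Proof. by move=> /pentomino_box[*]; rewrite /to_norm /= !inordK //; lia. Qed.

Lemma norm_blockE : norm_block B = to_norm @: B.
Proof.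
apply/setP => y; rewrite inE; apply/exists_inP/imsetP => -[x xB].
  move=> /eqP[e1 e2]; exists x => //; have [_ le_r _ le_c] := pentomino_box xB.
  by case: y e1 e2 => y1 y2 /= e1 e2; congr pair; apply: ord_inj; rewrite inordK; lia.
move=> ->; exists x => //; have [e1 e2] := to_norm_val xB.
by have [*] := pentomino_box xB; rewrite e1 e2 !subnK.
Qed.

Lemma natS_norm_block a b : natS (norm_block B) (a, b) = natS B (a + min_row B, b + min_col B).
Proof.
rewrite /natS norm_blockE; apply/exists_inP/exists_inP => -[z].
  case/imsetP=> x xB -> /eqP[<- <-]; exists x => //.
  by have [-> ->] := to_norm_val xB; have [*] := pentomino_box xB; rewrite !subnK.
move=> xB /eqP[e1 e2]; exists (to_norm z); first exact: imset_f.
by have [-> ->] := to_norm_val xB; rewrite e1 e2 !addnK.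
Qed.

Lemma card_norm_block : #|norm_block B| = 5.
Proof.
rewrite norm_blockE card_in_imset // => -[x1 x2] [y1 y2] xB yB e.
have e1 : ((to_norm (x1, x2)).1 : nat) = (to_norm (y1, y2)).1 by rewrite e.
have e2 : ((to_norm (x1, x2)).2 : nat) = (to_norm (y1, y2)).2 by rewrite e.
move: e1 e2 (pentomino_box xB) (pentomino_box yB).
have [-> ->] := to_norm_val xB; have [-> ->] := to_norm_val yB.
by rewrite /= => e1 e2 [? ? ? ?] [? ? ? ?]; congr pair; apply: ord_inj; lia.
Qed.

Lemma connected_norm_block : connected_set (norm_block B).
Proof.
rewrite norm_blockE; apply/forall_inP => _ /imsetP[x xB ->]; apply/forall_inP => _ /imsetP[y yB ->].
case/andP: pentB => _ /forall_inP /(_ x xB) /forall_inP /(_ y yB) /connectP[p].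
elim: p x xB => [|z p IH] x xB /=; first by move=> _ ->; exact: connect0.
case/andP=> /and3P[_ zB xz] /(IH z zB) conn_z last_y; apply: connect_trans (conn_z last_y).
apply: connect1; rewrite /= !imset_f //=.
have [ex1 ex2] := to_norm_val xB; have [ez1 ez2] := to_norm_val zB.
have [*] := pentomino_box xB; have [*] := pentomino_box zB.
by move: xz; rewrite /adj ex1 ex2 ez1 ez2; lia.
Qed.

Lemma norm_block_type : norm_block B \in pent_types.
Proof.
rewrite mem_enum inE /pentomino card_norm_block connected_norm_block /=.
have [xr xrB er] := min_row_attained; have [xc xcB ec] := min_col_attained.
rewrite norm_blockE; apply/andP; split; apply/exists_inP.
  by exists (to_norm xr); rewrite ?imset_f //; have [-> _] := to_norm_val xrB; rewrite er subnn.
by exists (to_norm xc); rewrite ?imset_f //; have [_ ->] := to_norm_val xcB; rewrite ec subnn.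
Qed.

Definition area_pos r := (r %/ 5 + min_row B) * (n + 4) + (r %% 5 + min_col B).

Let min_row_lt : min_row B < m.
Proof. by have [x _ <-] := min_row_attained. Qed.

Let min_col_lt : min_col B < n.
Proof. by have [x _ <-] := min_col_attained. Qed.

Lemma area_pos_divmod r : r < 25 ->
  area_pos r %/ (n + 4) = r %/ 5 + min_row B /\ area_pos r %% (n + 4) = r %% 5 + min_col B.
Proof.
move=> lt_r; have lt_c : r %% 5 + min_col B < n + 4 by have := ltn_mod r 5; lia.
have N_gt0 : 0 < n + 4 by rewrite addn4.
by rewrite /area_pos divnMDl // modnMDl (divn_small lt_c) (modn_small lt_c) addn0.
Qed.

Lemma area_pos_lt r : r < 25 -> area_pos r < (m + 4) * (n + 4).
Proof.
move=> lt_r; have lt_q : r %/ 5 < 5 by rewrite ltn_divLR.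
by have := ltn_mod r 5; rewrite /area_pos; nia.
Qed.

Lemma nth_tmpl_norm_block r : r < 25 ->
  nth None (tmpl_cards (norm_block B)) r = block_card B (area_pos r).
Proof.
move=> lt_r; rewrite /tmpl_cards nth_grid5 // block_card_pos; last by have := ltn_mod r 5; lia.
rewrite natS_norm_block (nbr_count_shift (A' := natS B) (dr := min_row B) (dc := min_col B)) //.
  by move=> a b; rewrite natS_norm_block.
by move=> a b /exists_inP[x xB /eqP[<- <-]]; have [*] := pentomino_box xB.
Qed.

Lemma area_positionsE :
  area_positions (n + 4) (min_row B * (n + 4) + min_col B) ((m + 4) * (n + 4)) =
    [seq (r, area_pos r) | r <- iota 0 25].
Proof.
apply/eq_in_map => r; rewrite mem_iota => /= lt_r; congr pair.
rewrite -(modn_small (area_pos_lt lt_r)); congr (_ %% _).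
by rewrite /area_pos !mulnDl; lia.
Qed.

Lemma area_pos_inj : {in gtn 25 &, injective area_pos}.
Proof.
move=> r1 r2 lt_r1 lt_r2 e; have [d1 m1] := area_pos_divmod lt_r1.
have [d2 m2] := area_pos_divmod lt_r2.
rewrite (divn_eq r1 5) (divn_eq r2 5); congr (_ * _ + _); apply/eqP.
  by rewrite -(eqn_add2r (min_row B)) -d1 -d2 e.
by rewrite -(eqn_add2r (min_col B)) -m1 -m2 e.
Qed.

Lemma block_card_area pos : block_card B pos != None ->
  exists2 r, r < 25 & area_pos r = pos.
Proof.
rewrite /block_card; case E: pos_cell => [x|] //; case: ifP => // xB _.
have [le_r ge_r le_c ge_c] := pentomino_box xB.
exists ((x.1 - min_row B) * 5 + (x.2 - min_col B)); first by nia.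
have := pos_cellK pos; rewrite E /= => <-.
have lt_c : x.2 - min_col B < 5 by lia.
rewrite /area_pos /cell_pos divnMDl // modnMDl (divn_small lt_c) (modn_small lt_c) addn0.
by rewrite !subnK.
Qed.

Lemma printing_block sh l S : size S = (m + 4) * (n + 4) ->
  (forall pos, block_card B pos != None -> nth [::] S pos = [:: None]) ->
  printing sh l (tmpl_cards (norm_block B))
    (area_positions (n + 4) (min_row B * (n + 4) + min_col B) (size S)) S =
  Some (mkseq (fun pos => print_card (block_card B pos) (nth [::] S pos)) (size S)).
Proof.
move=> sz_S blank; rewrite [X in area_positions _ _ X]sz_S area_positionsE.
set T := tmpl_cards _; set poss := [seq _ | r <- _].
have uniq_poss : uniq (unzip2 poss).
  rewrite /unzip2 -map_comp map_inj_in_uniq ?iota_uniq // => r1 r2.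
  by rewrite !mem_iota; apply: area_pos_inj.
have poss_lt : all (fun rc => rc.2 < size S) poss.
  by apply/allP => rc /mapP[r]; rewrite mem_iota sz_S => /andP[_ /area_pos_lt ?] ->.
have poss_blank r pos : (r, pos) \in poss ->
    nth None T r != None -> nth [::] S pos = [:: None].
  case/mapP=> r'; rewrite mem_iota => /andP[_ lt_r'] [-> ->].
  by rewrite nth_tmpl_norm_block //; apply: blank.
have [S' -> [sz' in_poss notin_poss]] := printing_correct sh l uniq_poss poss_lt poss_blank.
congr Some; apply: (@eq_from_nth _ [::]) => [|pos]; rewrite ?size_mkseq // sz' => lt_pos.
rewrite nth_mkseq //; case: (boolP (pos \in unzip2 poss)) => [|pos_notin].
  rewrite /unzip2 -map_comp => /mapP[r]; rewrite mem_iota => /andP[_ lt_r] /= ->.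
  by rewrite (in_poss r) ?nth_tmpl_norm_block //; apply: map_f; rewrite mem_iota.
rewrite notin_poss //.
case: (boolP (block_card B pos != None)) => [/block_card_area[r lt_r e]|].
  by case/negP: pos_notin; rewrite -e /unzip2 -map_comp; apply: map_f; rewrite mem_iota.
by rewrite negbK => /eqP ->.
Qed.

End Pentomino.

Lemma block_step_expected sh i Q B : pentomino B -> trivIset (B |: Q) -> B \notin Q ->
  block_step sh i B (mkseq (expected_pile Q) ((m + 4) * (n + 4))) correct_templates =
    Some (mkseq (expected_pile (B |: Q)) ((m + 4) * (n + 4)), correct_templates).
Proof.
move=> pentB triv BNQ; set S := mkseq _ _.
have sz_S : size S = (m + 4) * (n + 4) by rewrite size_mkseq.
rewrite block_stepE ?norm_block_type //; last first.
  by have := area_pos_lt pentB (isT : 0 < 25); rewrite /area_pos div0n mod0n !add0n sz_S.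
rewrite printing_block // => [|pos blank_pos]; last first.
  have [r lt_r e] := block_card_area pentB blank_pos.
  have lt_pos : pos < (m + 4) * (n + 4) by rewrite -e area_pos_lt.
  by rewrite nth_mkseq // (expected_pile_blank triv BNQ blank_pos).
rewrite sz_S /mkseq; congr (Some (_, _)); apply/eq_in_map => pos.
by rewrite mem_iota => /andP[_ lt_pos]; rewrite nth_mkseq // expected_pile_setU1.
Qed.

Lemma run_blocks_expected sh i bs Q : uniq bs -> all (@pentomino m n) bs ->
  trivIset (Q :|: [set B in bs]) -> (forall B, B \in bs -> B \notin Q) ->
  run_blocks sh i bs (mkseq (expected_pile Q) ((m + 4) * (n + 4))) correct_templates =
    Some (mkseq (expected_pile (Q :|: [set B in bs])) ((m + 4) * (n + 4)), correct_templates).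
Proof.
elim: bs i Q => [|B bs IH] i Q /=.
  by move=> *; rewrite (_ : [set B in [::]] = set0) ?setU0 //; apply/setP => B; rewrite !inE.
case/andP=> B_notin uniq_bs /andP[pentB pent_bs] triv notinQ.
have setE : Q :|: [set B' in B :: bs] = (B |: Q) :|: [set B' in bs].
  by apply/setP => B'; rewrite !inE orbCA orbA.
rewrite setE in triv *.
rewrite block_step_expected ?(trivIsetS (subsetUl _ _) triv) ?notinQ ?mem_head //.
apply: IH => // B' B'_bs; rewrite !inE negb_or notinQ ?inE ?B'_bs ?orbT // andbT.
by apply: contraNneq B_notin => <-.
Qed.

End Grid.

Unset Implicit Arguments. Set Strict Implicit. Set Printing Implicit Defensive.

Theorem lemma1 (m n : nat) (clue : cell m n -> option nat)
    (P : {set {set cell m n}}) (hsol : is_solution clue P)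
    (bs : seq {set cell m n}) (hbs : perm_eq bs (enum P))
    (sh : seq nat -> nat) :
  five_cells_accepts clue bs sh = true.
Proof.
case: hsol => /and3P[/eqP cover_P triv _] pent_P clue_P.
have uniq_bs : uniq bs by rewrite (perm_uniq hbs) enum_uniq.
have pent_bs : all (@pentomino m n) bs.
  by apply/allP => B; rewrite (perm_mem hbs) mem_enum; exact: pent_P.
have bsE : set0 :|: [set B in bs] = P.
  by apply/setP => B; rewrite set0U inE (perm_mem hbs) mem_enum.
have S0E : nseq ((m + 4) * (n + 4)) [:: None] =
             mkseq (@expected_pile m n set0) ((m + 4) * (n + 4)).
  apply: (@eq_from_nth _ [::]) => [|pos]; rewrite size_nseq ?size_mkseq // => lt_pos.
  by rewrite nth_nseq lt_pos nth_mkseq // expected_pile0.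
rewrite /five_cells_accepts -/correct_templates eqxx S0E run_blocks_expected ?bsE //=; last first.
  by move=> B _; rewrite in_set0.
apply/andP; split.
  apply/forallP => x; case clue_x: (clue x) => [v|] //.
  rewrite -/(cell_pos x) nth_mkseq ?cell_pos_lt // /expected_pile cell_posK cover_P in_setT.
  by rewrite (clue_P x v clue_x).
apply/allP => pos; rewrite mem_iota => /andP[_ lt_pos]; apply/implyP => /pos_cell_dummy dummy.
by rewrite nth_mkseq // /expected_pile dummy.
Qed.
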